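(* Every bounded orbit of the planar Stark problem $$\ddot x=-\frac{x}{r^3}+1,\qquad \ddot y=-\frac{y}{r^3},\qquad r=\sqrt{x^2+y^2},$$ is either a collision–ejection orbit on the negative $x$-axis, or it remains within the unit disc $\{|q|\le 1\}$ for all time.
   Context: A collision–ejection orbit on the negative $x$-axis is a solution moving on $\{(x,0):x<0\}$ which reaches the origin (collision) and, after regularization, is ejected back along the same half-line. *)

From Stdlib Require Import Reals.
From Coquelicot Require Import Coquelicot.
Open Scope R_scope.

Definition stark_r (x y : R) : R := sqrt (x ^ 2 + y ^ 2).

Definition stark_ax (x y : R) : R := - x / (stark_r x y) ^ 3 + 1.
Definition stark_ay (x y : R) : R := - y / (stark_r x y) ^ 3.

Definition collides (x y : R -> R) (t : R) : Prop := x t = 0 /\ y t = 0.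

(* A (regularized) solution of the planar Stark problem defined for all
   time t in R:
   - q = (x,y) is continuous;
   - away from collisions q is C^2-differentiable (with velocity (vx,vy))
     and satisfies the Stark equations;
   - collisions are isolated and, as in the Levi-Civita regularization,
     at a collision time t0 the orbit is ejected back along the same path:
     q (t0 + s) = q (t0 - s) for small s. *)
Definition stark_solution (x y : R -> R) : Prop :=
  (forall t, continuous x t /\ continuous y t) /\
  (exists vx vy : R -> R, forall t, ~ collides x y t ->
      is_derive x t (vx t) /\ is_derive y t (vy t) /\
      is_derive vx t (stark_ax (x t) (y t)) /\
      is_derive vy t (stark_ay (x t) (y t))) /\
  (forall t0, collides x y t0 ->
     exists eps, 0 < eps /\ forall s, 0 < Rabs s < eps ->
       ~ collides x y (t0 + s) /\
       x (t0 + s) = x (t0 - s) /\ y (t0 + s) = y (t0 - s)).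

Definition bounded_orbit (x y : R -> R) : Prop :=
  exists M, forall t, stark_r (x t) (y t) <= M.

Definition collision_ejection_neg_x_axis (x y : R -> R) : Prop :=
  (forall t, y t = 0 /\ x t <= 0) /\ (exists t, collides x y t).

From Stdlib Require Import Reals Lra Lia Nsatz Classical.
From Coquelicot Require Import Coquelicot.
Open Scope R_scope.

(* Let u = r + x; it vanishes exactly on the closed negative x-axis. Along a
   solution the energy h and the Stark analogue g of the Laplace-Runge-Lenz
   component are conserved, and (u' r)^2 = 4 u P(u) with
   P(u) = (1 - g)/2 + h u/2 + u^2/4.  If u > 0 and u + h > 0 at some time, P
   increases along u from then on, so u' r stays away from 0 and u grows
   linearly (forward or backward in time), which a bounded orbit cannot do.
   As u + h >= r - 1/r, a bounded orbit has u = 0 wherever r > 1.  Once u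
   vanishes on an interval it vanishes forever: through a collision by the
   ejection symmetry, and elsewhere because g = 1 on the axis while g = 1
   forces u = 0.  Finally, on the negative x-axis without collision x'' >= 1,
   which would push x to +oo. *)

Lemma is_derive_eq_value (f : R -> R) (t l l' : R) :
  is_derive f t l -> l = l' -> is_derive f t l'.
Proof. intros H <-; exact H. Qed.

Lemma is_derive_Rconst (c t : R) : is_derive (fun _ => c) t 0.
Proof. apply (is_derive_const (K := R_AbsRing) (V := R_NormedModule)). Qed.

Lemma is_derive_Rplus (f g : R -> R) (t a b : R) :
  is_derive f t a -> is_derive g t b -> is_derive (fun s => f s + g s) t (a + b).
Proof. apply (is_derive_plus f g). Qed.

Lemma is_derive_Rminus (f g : R -> R) (t a b : R) :
  is_derive f t a -> is_derive g t b -> is_derive (fun s => f s - g s) t (a - b).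
Proof. apply (is_derive_minus f g). Qed.

Lemma is_derive_Rmult (f g : R -> R) (t a b : R) :
  is_derive f t a -> is_derive g t b ->
  is_derive (fun s => f s * g s) t (a * g t + f t * b).
Proof. intros. apply (is_derive_mult f g); auto. intros; apply Rmult_comm. Qed.

Lemma is_derive_Rdiv_const (f : R -> R) (t a c : R) :
  is_derive f t a -> is_derive (fun s => f s / c) t (a / c).
Proof.
  intro H. eapply is_derive_eq_value.
  - apply (is_derive_Rmult f (fun _ => / c)); [exact H | apply is_derive_Rconst].
  - unfold Rdiv; ring.
Qed.

Lemma is_derive_continuity_pt (f : R -> R) (t l : R) :
  is_derive f t l -> continuity_pt f t.
Proof.
  intro H. apply continuity_pt_filterlim, (ex_derive_continuous f t). exists l; exact H.
Qed.

Lemma continuity_pt_gt_near (f : R -> R) (m t : R) :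
  continuity_pt f t -> m < f t ->
  exists e, 0 < e /\ forall s, Rabs (s - t) < e -> m < f s.
Proof.
  intros Hc Hgt. destruct (Hc (f t - m) ltac:(lra)) as [e [He Hnear]].
  exists e. split; [exact He|]. intros s Hs.
  destruct (Req_dec s t) as [->|Hst]; [exact Hgt|].
  assert (Hd : Rabs (f s - f t) < f t - m).
  { apply (Hnear s). split; [split; [exact I | auto] | exact Hs]. }
  apply Rabs_def2 in Hd. lra.
Qed.

Lemma continuity_pt_ge_from_left (f : R -> R) (a t m : R) :
  a < t -> continuity_pt f t -> (forall s, a <= s < t -> m <= f s) -> m <= f t.
Proof.
  intros Hat Hc Hleft. apply Rnot_lt_le. intro Hlt.
  destruct (Hc (m - f t) ltac:(lra)) as [e [He Hnear]].
  set (s := Rmax a (t - e / 2)).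
  assert (Hs : a <= s < t) by (unfold s; apply Rmax_case_strong; lra).
  assert (Hd : Rabs (f s - f t) < m - f t).
  { apply (Hnear s). split.
    - split; [exact I | lra].
    - unfold s; simpl; unfold R_dist. apply Rmax_case_strong; intros;
        rewrite Rabs_left; lra. }
  specialize (Hleft s Hs). pose proof (Rle_abs (f s - f t)). lra.
Qed.

Lemma interval_induction (a b : R) (Q : R -> Prop) :
  a <= b -> Q a ->
  (forall t, a < t <= b -> (forall s, a <= s < t -> Q s) -> Q t) ->
  (forall t, a <= t < b -> (forall s, a <= s <= t -> Q s) ->
     exists e, 0 < e /\ forall s, t < s < t + e -> Q s) ->
  forall t, a <= t <= b -> Q t.
Proof.
  intros Hab Qa Hclosed Hopen.
  set (E := fun t => a <= t <= b /\ forall s, a <= s <= t -> Q s).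
  assert (Ea : E a).
  { split; [lra|]. intros s Hs. replace s with a by lra. exact Qa. }
  destruct (completeness E) as [c [Hub Hlub]].
  { exists b. intros z [Hz _]. lra. }
  { exists a. exact Ea. }
  assert (Hac : a <= c) by (apply Hub, Ea).
  assert (Hcb : c <= b) by (apply Hlub; intros z [Hz _]; lra).
  assert (Hbelow : forall s, a <= s < c -> Q s).
  { intros s Hs. apply NNPP. intro HQ.
    assert (c <= s); [|lra].
    apply Hlub. intros z [Hz HQz]. apply Rnot_lt_le. intro Hsz.
    apply HQ, HQz. lra. }
  assert (Ec : forall s, a <= s <= c -> Q s).
  { intros s Hs. destruct (Req_dec s c) as [->|Hsc]; [|apply Hbelow; lra].
    destruct (Req_dec c a) as [->|Hca]; [exact Qa|].
    apply Hclosed; [lra | exact Hbelow]. }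
  assert (Hcb' : c = b).
  { destruct (Rle_lt_or_eq_dec c b Hcb) as [Hlt|]; [exfalso|assumption].
    destruct (Hopen c ltac:(lra) Ec) as [e [He Hright]].
    set (t' := Rmin (c + e / 2) b).
    assert (Ht' : c < t' <= c + e / 2).
    { unfold t'. apply Rmin_case_strong; lra. }
    assert (t' <= c); [|lra].
    apply Hub. split; [split; [lra | apply Rmin_r]|].
    intros s Hs. destruct (Rle_dec s c); [apply Ec; lra | apply Hright; lra]. }
  subst c. intros t Ht. apply Ec. lra.
Qed.

Lemma is_derive_increment_ge (f df : R -> R) (a b c : R) : a <= b ->
  (forall s, a <= s <= b -> is_derive f s (df s)) ->
  (forall s, a <= s <= b -> c <= df s) -> c * (b - a) <= f b - f a.
Proof.
  intros Hab Hd Hc. destruct (MVT_gen f a b df) as [z [Hz ->]];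
    rewrite Rmin_left, Rmax_right in * by lra.
  - intros s Hs. apply Hd. lra.
  - intros s Hs. apply (is_derive_continuity_pt f s (df s)), Hd. lra.
  - apply Rmult_le_compat_r; [lra | apply Hc; lra].
Qed.

Lemma is_derive_zero_eq (f : R -> R) (a b : R) : a <= b ->
  (forall s, a <= s <= b -> is_derive f s 0) -> f b = f a.
Proof.
  intros Hab Hd. destruct (Rle_lt_or_eq_dec a b Hab) as [Hlt | ->]; [|reflexivity].
  symmetry. exact (eq_is_derive f a b Hd Hlt).
Qed.

Lemma is_derive_pos_increase_right (f : R -> R) (t l : R) : is_derive f t l -> 0 < l ->
  exists e, 0 < e /\ forall h, 0 < h < e -> f t < f (t + h).
Proof.
  intros Hd Hl. apply is_derive_Reals in Hd.
  destruct (Hd (l / 2) ltac:(lra)) as [[e He] Hquot].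
  exists e. split; [exact He|]. intros h Hh.
  assert (Hq : Rabs ((f (t + h) - f t) / h - l) < l / 2)
    by (apply Hquot; simpl; [intro; lra | rewrite Rabs_pos_eq; lra]).
  apply Rabs_def2 in Hq. destruct Hq as [_ Hq].
  assert (Hpos : 0 < (f (t + h) - f t) / h) by lra.
  apply (Rmult_lt_compat_r h) in Hpos; [|lra].
  unfold Rdiv in Hpos. rewrite Rmult_assoc, Rinv_l, Rmult_1_r, Rmult_0_l in Hpos by lra. lra.
Qed.

Lemma accelerated_eventually_pos (f v a : R -> R) :
  (forall t, is_derive f t (v t)) -> (forall t, is_derive v t (a t)) ->
  (forall t, 1 <= a t) -> exists t, 0 < f t.
Proof.
  intros Hf Hv Ha.
  assert (Hspeed : forall s, 0 <= s -> s <= v s - v 0).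
  { intros s Hs. assert (1 * (s - 0) <= v s - v 0); [|lra].
    apply (is_derive_increment_ge v a); [exact Hs | intros; apply Hv | intros; apply Ha]. }
  set (T := 2 * (Rabs (v 0) + Rabs (f 0) + 1)).
  pose proof (Rabs_pos (v 0)). pose proof (Rabs_pos (f 0)).
  assert (HT : 2 <= T) by (unfold T; lra).
  assert (Hpos : 0 * (T - 0) <= (2 * (f T - v 0 * T) - T ^ 2) - (2 * (f 0 - v 0 * 0) - 0 ^ 2)).
  { apply (is_derive_increment_ge (fun s => 2 * (f s - v 0 * s) - s ^ 2)
             (fun s => 2 * (v s - v 0) - 2 * s)); [lra | |].
    - intros s _. apply is_derive_Rminus; [|auto_derive; [exact I | ring]].
      apply is_derive_scal, is_derive_Rminus; [apply Hf|]. auto_derive; [exact I | ring].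
    - intros s Hs. pose proof (Hspeed s (proj1 Hs)). lra. }
  exists T.
  assert (Hsq : T ^ 2 = 2 * T * (Rabs (v 0) + Rabs (f 0) + 1)) by (unfold T; ring).
  pose proof (Rabs_maj2 (v 0)). pose proof (Rabs_maj2 (f 0)).
  assert (- Rabs (v 0) * T <= v 0 * T) by (apply Rmult_le_compat_r; lra).
  assert (2 * (Rabs (f 0) + 1) <= T * (Rabs (f 0) + 1))
    by (apply Rmult_le_compat_r; lra).
  lra.
Qed.

Lemma is_derive_locally_zero (f : R -> R) (p l e : R) : 0 < e -> is_derive f p l ->
  (forall z, Rabs (z - p) < e -> f z = 0) -> l = 0.
Proof.
  intros He Hd Hzero.
  assert (H0 : is_derive (fun _ => 0) p l).
  { apply (is_derive_ext_loc f); [|exact Hd].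
    exists (mkposreal e He). intros z Hz. apply Hzero, Hz. }
  rewrite <- (is_derive_unique _ _ _ H0).
  exact (is_derive_unique _ _ _ (is_derive_Rconst 0 p)).
Qed.

(** * First integrals in parabolic coordinates *)

Definition stark_ode (x y vx vy : R -> R) : Prop :=
  (forall t, continuous x t /\ continuous y t) /\
  (forall t, ~ collides x y t ->
      is_derive x t (vx t) /\ is_derive y t (vy t) /\
      is_derive vx t (stark_ax (x t) (y t)) /\
      is_derive vy t (stark_ay (x t) (y t))).

Definition ejects_back (x y : R -> R) : Prop :=
  forall t0, collides x y t0 ->
    exists eps, 0 < eps /\ forall s, 0 < Rabs s < eps ->
      ~ collides x y (t0 + s) /\
      x (t0 + s) = x (t0 - s) /\ y (t0 + s) = y (t0 - s).

Lemma pow_SS_sqr (r s : R) (n : nat) : r ^ 2 = s -> r ^ S (S n) = r ^ n * s.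
Proof. intros <-. simpl. ring. Qed.

(* With ds = dt / r, (du/ds)^2 = 4 u P(u) is the separated equation for u;
   h and g are the values of [energy] and [lenz]. *)
Definition parab_potential (h g u : R) := (1 - g) / 2 + h * u / 2 + u ^ 2 / 4.

Lemma parab_potential_le (h g u1 u : R) : 0 < u1 + h -> u1 <= u ->
  parab_potential h g u1 <= parab_potential h g u.
Proof.
  intros Hh Hu. unfold parab_potential.
  assert (0 <= (u - u1) * (h / 2 + (u + u1) / 4)) by (apply Rmult_le_pos; lra).
  nra.
Qed.

Section Orbit.

Variables x y vx vy : R -> R.

Definition radius t := stark_r (x t) (y t).

(* u = xi^2 in the parabolic coordinates xi^2 = r + x, eta^2 = r - x. *)
Definition parab t := radius t + x t.

Definition parab_rate t := (x t * vx t + y t * vy t) / radius t + vx t.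

Definition energy t := (vx t ^ 2 + vy t ^ 2) / 2 - / radius t - x t.

(* x-component of the Laplace-Runge-Lenz vector, corrected by y^2/2 for the
   constant field: the second first integral of the Stark problem. *)
Definition lenz t := vy t * (x t * vy t - y t * vx t) - x t / radius t + y t ^ 2 / 2.

Definition parab_accel t :=
  let P := x t * vx t + y t * vy t in
  (vx t ^ 2 + vy t ^ 2 - / radius t + x t) / radius t - P ^ 2 / radius t ^ 3
  + 1 - x t / radius t ^ 3.

Lemma radius_sqr t : radius t ^ 2 = x t ^ 2 + y t ^ 2.
Proof. unfold radius, stark_r. apply pow2_sqrt. nra. Qed.

Lemma radius_ge0 t : 0 <= radius t.
Proof. apply sqrt_pos. Qed.

Lemma radius_gt0 t : ~ collides x y t -> 0 < radius t.
Proof.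
  intro Hnc. apply sqrt_lt_R0.
  destruct (Req_dec (x t) 0) as [Hx|Hx].
  - assert (Hy : y t <> 0) by (intro Hy; apply Hnc; split; assumption).
    pose proof (pow2_gt_0 _ Hy). nra.
  - pose proof (pow2_gt_0 _ Hx). nra.
Qed.

Lemma radius_collision t : collides x y t -> radius t = 0.
Proof.
  intros [Hx Hy]. unfold radius, stark_r. rewrite Hx, Hy, pow_i, Rplus_0_l by lia.
  apply sqrt_0.
Qed.

Lemma Rabs_x_le_radius t : Rabs (x t) <= radius t.
Proof.
  pose proof (radius_sqr t). pose proof (radius_ge0 t).
  rewrite <- (Rabs_pos_eq (radius t)) by assumption.
  apply Rsqr_le_abs_0. unfold Rsqr. nra.
Qed.

Lemma parab_ge0 t : 0 <= parab t.
Proof. unfold parab. pose proof (Rabs_x_le_radius t). pose proof (Rabs_maj2 (x t)). lra. Qed.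

Lemma parab_le_2radius t : parab t <= 2 * radius t.
Proof. unfold parab. pose proof (Rabs_x_le_radius t). pose proof (Rle_abs (x t)). lra. Qed.

Lemma parab_gt0_no_collision t : 0 < parab t -> ~ collides x y t.
Proof.
  intros Hu Hc. unfold parab in Hu. rewrite (radius_collision t Hc), (proj1 Hc) in Hu. lra.
Qed.

Lemma parab_eq0 t : parab t = 0 -> y t = 0 /\ x t <= 0.
Proof.
  unfold parab. intro Hu. pose proof (radius_sqr t). pose proof (radius_ge0 t).
  split; [|lra]. apply Rsqr_eq_0. unfold Rsqr. nra.
Qed.

Lemma parab_energy_ge t : radius t - / radius t <= parab t + energy t.
Proof.
  unfold parab, energy. pose proof (pow2_ge_0 (vx t)). pose proof (pow2_ge_0 (vy t)). lra.
Qed.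

Lemma parab_rate_sqr t : ~ collides x y t ->
  (parab_rate t * radius t) ^ 2 =
  4 * parab t * parab_potential (energy t) (lenz t) (parab t).
Proof.
  intro Hnc. pose proof (radius_gt0 t Hnc). pose proof (radius_sqr t) as Hr2.
  unfold parab_rate, parab_potential, parab, energy, lenz.
  set (r := radius t) in *. clearbody r.
  field_simplify_eq; [|lra].
  repeat rewrite (pow_SS_sqr _ _ _ Hr2). ring.
Qed.

Lemma parab_accel_turning t : ~ collides x y t -> parab_rate t = 0 -> 0 < parab t ->
  parab_accel t * radius t ^ 2 = parab t * (parab t + energy t).
Proof.
  intros Hnc HD Hu. pose proof (radius_gt0 t Hnc). pose proof (radius_sqr t) as Hr2.
  unfold parab_rate, parab_accel, parab, energy in *.
  set (r := radius t) in *. clearbody r.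
  set (X := x t) in *. set (Y := y t) in *. set (VX := vx t) in *. set (VY := vy t) in *.
  clearbody X Y VX VY.
  assert (HVX : VX = - Y * VY / (r + X)).
  { field_simplify_eq; [|lra].
    replace (VX * r + VX * X) with (((X * VX + Y * VY) / r + VX) * r - Y * VY) by (field; lra).
    rewrite HD. ring. }
  subst VX. field_simplify_eq; [|lra].
  repeat rewrite (pow_SS_sqr _ _ _ Hr2). ring.
Qed.

Hypothesis Hode : stark_ode x y vx vy.

Lemma radius_continuity_pt t : continuity_pt radius t.
Proof.
  destruct (proj1 Hode t) as [Hx Hy].
  apply continuity_pt_filterlim in Hx, Hy.
  apply (continuity_pt_ext (comp sqrt (fun s => x s * x s + y s * y s))).
  - intro s. unfold comp, radius, stark_r. f_equal. ring.
  - apply continuity_pt_comp.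
    + apply continuity_pt_plus; apply continuity_pt_mult; assumption.
    + apply continuity_pt_sqrt. nra.
Qed.

Lemma parab_continuity_pt t : continuity_pt parab t.
Proof.
  apply continuity_pt_plus; [apply radius_continuity_pt|].
  apply continuity_pt_filterlim, (proj1 Hode t).
Qed.

Section Regular.

Variable t : R.
Hypothesis Hnc : ~ collides x y t.

Let Hx : is_derive x t (vx t). Proof. apply (proj2 Hode t Hnc). Qed.
Let Hy : is_derive y t (vy t). Proof. apply (proj2 Hode t Hnc). Qed.
Let Hvx : is_derive vx t (stark_ax (x t) (y t)). Proof. apply (proj2 Hode t Hnc). Qed.
Let Hvy : is_derive vy t (stark_ay (x t) (y t)). Proof. apply (proj2 Hode t Hnc). Qed.
Let Hr : 0 < radius t. Proof. apply radius_gt0, Hnc. Qed.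
Let Hr2 : radius t ^ 2 = x t ^ 2 + y t ^ 2. Proof. apply radius_sqr. Qed.

Lemma radius_derive : is_derive radius t ((x t * vx t + y t * vy t) / radius t).
Proof.
  eapply is_derive_eq_value.
  - apply is_derive_sqrt; [|rewrite <- Hr2; apply pow_lt, Hr].
    apply is_derive_Rplus; apply is_derive_pow; eassumption.
  - cbn [INR Init.Nat.pred]. change (sqrt (x t ^ 2 + y t ^ 2)) with (radius t). field. lra.
Qed.

Lemma parab_derive : is_derive parab t (parab_rate t).
Proof. apply is_derive_Rplus; [exact radius_derive | exact Hx]. Qed.

Lemma energy_derive : is_derive energy t 0.
Proof.
  eapply is_derive_eq_value.
  - apply is_derive_Rminus; [apply is_derive_Rminus|exact Hx].
    + apply is_derive_Rdiv_const, is_derive_Rplus; apply is_derive_pow; eassumption.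
    + apply is_derive_inv; [exact radius_derive | lra].
  - unfold stark_ax, stark_ay. fold (radius t). cbn [INR Init.Nat.pred].
    field_simplify_eq; [|lra]. nsatz.
Qed.

Lemma lenz_derive : is_derive lenz t 0.
Proof.
  eapply is_derive_eq_value.
  - apply is_derive_Rplus; [apply is_derive_Rminus|].
    + apply is_derive_Rmult; [exact Hvy|].
      apply is_derive_Rminus; apply is_derive_Rmult; eassumption.
    + apply is_derive_div; [exact Hx | exact radius_derive | lra].
    + apply is_derive_Rdiv_const, is_derive_pow, Hy.
  - unfold stark_ax, stark_ay. fold (radius t). cbn [INR Init.Nat.pred].
    field_simplify_eq; [|lra]. nsatz.
Qed.

Lemma parab_rate_derive : is_derive parab_rate t (parab_accel t).
Proof.
  eapply is_derive_eq_value.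
  - apply is_derive_Rplus; [|exact Hvx].
    apply is_derive_div; [|exact radius_derive | lra].
    apply is_derive_Rplus; apply is_derive_Rmult; eassumption.
  - unfold parab_accel, stark_ax, stark_ay. fold (radius t).
    field_simplify_eq; [|lra]. nsatz.
Qed.

End Regular.

Lemma no_collision_near t : ~ collides x y t ->
  exists e, 0 < e /\ forall s, Rabs (s - t) < e -> ~ collides x y s.
Proof.
  intro Hnc.
  destruct (continuity_pt_gt_near radius 0 t (radius_continuity_pt t) (radius_gt0 t Hnc))
    as [e [He Hnear]].
  exists e. split; [exact He|]. intros s Hs Hc.
  specialize (Hnear s Hs). rewrite (radius_collision s Hc) in Hnear. lra.
Qed.

Lemma energy_const a b : a <= b -> (forall s, a <= s <= b -> ~ collides x y s) ->
  energy b = energy a.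
Proof.
  intros Hab Hnc. apply is_derive_zero_eq; [exact Hab|].
  intros s Hs. apply energy_derive, Hnc, Hs.
Qed.

Lemma lenz_const a b : a <= b -> (forall s, a <= s <= b -> ~ collides x y s) ->
  lenz b = lenz a.
Proof.
  intros Hab Hnc. apply is_derive_zero_eq; [exact Hab|].
  intros s Hs. apply lenz_derive, Hnc, Hs.
Qed.

End Orbit.

(** * Time reversal *)

Definition time_rev (f : R -> R) t := f (- t).
Definition time_rev_vel (f : R -> R) t := - f (- t).

Lemma is_derive_time_rev (f : R -> R) t l :
  is_derive f (- t) l -> is_derive (time_rev f) t (- l).
Proof.
  intro H. eapply is_derive_eq_value.
  - apply (is_derive_comp f (fun s => - s)); [exact H|].
    apply (is_derive_opp (fun s : R => s)), (is_derive_id (K := R_AbsRing)).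
  - simpl. unfold scal; simpl. unfold mult, opp, one; simpl. ring.
Qed.

Lemma continuous_time_rev (f : R -> R) t : continuous f (- t) -> continuous (time_rev f) t.
Proof.
  intro H. apply (continuous_comp (fun s : R => - s) f); [|exact H].
  apply (ex_derive_continuous (fun s : R => - s)). auto_derive. exact I.
Qed.

Section TimeReversal.

Variables x y vx vy : R -> R.

Lemma stark_ode_time_rev : stark_ode x y vx vy ->
  stark_ode (time_rev x) (time_rev y) (time_rev_vel vx) (time_rev_vel vy).
Proof.
  intros [Hc Hd]. split.
  - intro t. destruct (Hc (- t)). split; apply continuous_time_rev; assumption.
  - intros t Hnc. destruct (Hd (- t) Hnc) as (Hx & Hy & Hvx & Hvy).
    unfold time_rev_vel. split; [|split; [|split]].
    + apply is_derive_time_rev, Hx.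
    + apply is_derive_time_rev, Hy.
    + eapply is_derive_eq_value.
      * exact (is_derive_opp _ _ _ (is_derive_time_rev vx t _ Hvx)).
      * apply Ropp_involutive.
    + eapply is_derive_eq_value.
      * exact (is_derive_opp _ _ _ (is_derive_time_rev vy t _ Hvy)).
      * apply Ropp_involutive.
Qed.

Lemma ejects_back_time_rev : ejects_back x y -> ejects_back (time_rev x) (time_rev y).
Proof.
  intros Hej t0 Hc. destruct (Hej (- t0) Hc) as [eps [He Hsym]].
  exists eps. split; [exact He|]. intros s Hs.
  rewrite <- Rabs_Ropp in Hs. destruct (Hsym (- s) Hs) as (Hnc & Hx & Hy).
  unfold time_rev, collides.
  replace (- (t0 + s)) with (- t0 + - s) by ring.
  replace (- (t0 - s)) with (- t0 - - s) by ring.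
  auto.
Qed.

Lemma parab_time_rev t : parab (time_rev x) (time_rev y) t = parab x y (- t).
Proof. reflexivity. Qed.

Lemma energy_time_rev t :
  energy (time_rev x) (time_rev y) (time_rev_vel vx) (time_rev_vel vy) t =
  energy x y vx vy (- t).
Proof. unfold energy, radius, time_rev_vel, time_rev. unfold Rdiv. ring. Qed.

Lemma parab_rate_time_rev t :
  parab_rate (time_rev x) (time_rev y) (time_rev_vel vx) (time_rev_vel vy) t =
  - parab_rate x y vx vy (- t).
Proof. unfold parab_rate, radius, time_rev_vel, time_rev. unfold Rdiv. ring. Qed.

End TimeReversal.

(** * Bounded orbits cannot escape in u *)

Section Escape.

Variables x y vx vy : R -> R.
Hypothesis Hode : stark_ode x y vx vy.
Variable M : R.
Hypothesis Hbound : forall t, radius x y t <= M.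

Variable t1 : R.
Hypothesis Hu1 : 0 < parab x y t1.
Hypothesis Hhu1 : 0 < parab x y t1 + energy x y vx vy t1.
Hypothesis HD1 : 0 < parab_rate x y vx vy t1.

Local Notation u := (parab x y).
Local Notation D := (parab_rate x y vx vy).

Let M_pos : 0 < M.
Proof.
  pose proof (radius_gt0 x y t1 (parab_gt0_no_collision x y t1 Hu1)).
  pose proof (Hbound t1). lra.
Qed.

Let c := parab_potential (energy x y vx vy t1) (lenz x y vx vy t1) (u t1).

Lemma escape_potential_pos : 0 < c.
Proof.
  assert (Hr : 0 < radius x y t1) by apply radius_gt0, parab_gt0_no_collision, Hu1.
  assert (Hsq : 0 < (D t1 * radius x y t1) ^ 2)
    by (apply pow_lt, Rmult_lt_0_compat; assumption).
  rewrite parab_rate_sqr in Hsq by apply parab_gt0_no_collision, Hu1.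
  fold c in Hsq. nra.
Qed.

Lemma escape_rate_sqr_ge t : t1 <= t -> (forall s, t1 <= s <= t -> u t1 <= u s) ->
  4 * u t1 * c <= (D t * radius x y t) ^ 2.
Proof.
  intros Ht Hu.
  assert (Hnc : forall s, t1 <= s <= t -> ~ collides x y s).
  { intros s Hs. apply parab_gt0_no_collision. specialize (Hu s Hs). lra. }
  rewrite parab_rate_sqr by (apply Hnc; lra).
  rewrite (energy_const x y vx vy Hode t1 t), (lenz_const x y vx vy Hode t1 t) by assumption.
  pose proof (Hu t (conj Ht (Rle_refl t))). pose proof escape_potential_pos.
  apply Rmult_le_compat; [lra | lra | lra |].
  apply parab_potential_le; [exact Hhu1 | assumption].
Qed.

Lemma escape_invariant T : t1 <= T -> u t1 <= u T /\ 0 < D T.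
Proof.
  intro HT. apply (interval_induction t1 T (fun t => u t1 <= u t /\ 0 < D t));
    [exact HT | split; [lra | exact HD1] | | | lra].
  - intros t Ht Hleft.
    assert (Hut : u t1 <= u t).
    { apply (continuity_pt_ge_from_left u t1 t); [lra | | intros s Hs; apply Hleft, Hs].
      apply (parab_continuity_pt x y vx vy Hode). }
    assert (Hall : forall s, t1 <= s <= t -> u t1 <= u s).
    { intros s Hs. destruct (Req_dec s t) as [->|]; [exact Hut | apply Hleft; lra]. }
    assert (Hnc : ~ collides x y t) by (apply parab_gt0_no_collision; lra).
    assert (HD0 : 0 <= D t).
    { apply (continuity_pt_ge_from_left D t1 t); [lra | |].
      - eapply is_derive_continuity_pt, parab_rate_derive; assumption.
      - intros s Hs. left. apply Hleft, Hs. }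
    pose proof (escape_rate_sqr_ge t ltac:(lra) Hall). pose proof escape_potential_pos.
    split; [exact Hut|]. destruct HD0 as [|HD0]; [assumption|].
    rewrite <- HD0 in *. nra.
  - intros t Ht Hleft. destruct (Hleft t (conj (proj1 Ht) (Rle_refl t))) as [Hut HDt].
    assert (Hnc : ~ collides x y t) by (apply parab_gt0_no_collision; lra).
    destruct (continuity_pt_gt_near D 0 t) as [e1 [He1 HDnear]]; [|exact HDt|].
    { eapply is_derive_continuity_pt, parab_rate_derive; assumption. }
    destruct (continuity_pt_gt_near u 0 t) as [e2 [He2 Hunear]];
      [apply (parab_continuity_pt x y vx vy Hode) | lra |].
    exists (Rmin e1 e2). split; [apply Rmin_glb_lt; assumption|].
    intros s Hs. pose proof (Rmin_l e1 e2). pose proof (Rmin_r e1 e2).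
    assert (Hnear : forall z, t <= z <= s -> Rabs (z - t) < e1 /\ Rabs (z - t) < e2).
    { intros z Hz. rewrite Rabs_pos_eq by lra. lra. }
    split; [|apply HDnear, Hnear; lra].
    assert (0 * (s - t) <= u s - u t); [|lra].
    apply (is_derive_increment_ge u D); [lra | |].
    + intros z Hz. apply parab_derive; [exact Hode|].
      apply parab_gt0_no_collision, Hunear, Hnear, Hz.
    + intros z Hz. left. apply HDnear, Hnear, Hz.
Qed.

Lemma escape_rate_ge : exists a, 0 < a /\ forall t, t1 <= t -> a <= D t.
Proof.
  pose proof escape_potential_pos.
  set (K := 4 * u t1 * c / M ^ 2).
  assert (HK : 0 < K) by (apply Rdiv_lt_0_compat; [nra | apply pow_lt, M_pos]).
  exists (Rmin 1 K). split; [apply Rmin_glb_lt; lra|].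
  intros t Ht. pose proof (Rmin_l 1 K). pose proof (Rmin_r 1 K).
  assert (Hinv : forall s, t1 <= s <= t -> u t1 <= u s)
    by (intros s Hs; apply escape_invariant; lra).
  pose proof (escape_rate_sqr_ge t Ht Hinv) as Hsq.
  pose proof (proj2 (escape_invariant t Ht)).
  pose proof (Hbound t). pose proof (radius_ge0 x y t).
  assert (HKD : K <= D t ^ 2).
  { unfold K. apply (Rmult_le_reg_r (M ^ 2)); [apply pow_lt, M_pos|].
    unfold Rdiv. rewrite Rmult_assoc, Rinv_l, Rmult_1_r by (apply pow_nonzero; lra).
    rewrite Rpow_mult_distr in Hsq.
    assert (radius x y t ^ 2 <= M ^ 2) by (apply pow_incr; lra).
    pose proof (pow2_ge_0 (D t)). nra. }
  nra.
Qed.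

Lemma escape_forward : False.
Proof.
  destruct escape_rate_ge as [a [Ha Hrate]].
  pose proof M_pos.
  set (T := t1 + (2 * M + 1) / a).
  assert (HT1 : t1 <= T) by (unfold T; pose proof (Rdiv_lt_0_compat (2 * M + 1) a); lra).
  assert (HT : a * (T - t1) = 2 * M + 1) by (unfold T; field; lra).
  assert (Hgrowth : a * (T - t1) <= u T - u t1).
  { apply (is_derive_increment_ge u D); [exact HT1 | |].
    - intros s Hs. apply parab_derive; [exact Hode|].
      apply parab_gt0_no_collision. pose proof (escape_invariant s (proj1 Hs)). lra.
    - intros s Hs. apply Hrate, Hs. }
  pose proof (parab_le_2radius x y T). pose proof (Hbound T). lra.
Qed.

End Escape.

Lemma turning_point_escapes x y vx vy t : stark_ode x y vx vy ->
  0 < parab x y t -> 0 < parab x y t + energy x y vx vy t -> parab_rate x y vx vy t = 0 ->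
  exists t', 0 < parab x y t' /\ 0 < parab x y t' + energy x y vx vy t' /\
             0 < parab_rate x y vx vy t'.
Proof.
  intros Hode Hu Huh Hzero.
  assert (Hnc : ~ collides x y t) by (apply parab_gt0_no_collision, Hu).
  assert (Haccel : 0 < parab_accel x y vx vy t).
  { pose proof (parab_accel_turning x y vx vy t Hnc Hzero Hu).
    pose proof (radius_gt0 x y t Hnc).
    assert (0 < parab x y t * (parab x y t + energy x y vx vy t)) by nra.
    nra. }
  destruct (is_derive_pos_increase_right _ _ _ (parab_rate_derive x y vx vy Hode t Hnc) Haccel)
    as [e0 [He0 HDright]].
  destruct (continuity_pt_gt_near (fun s => parab x y s + energy x y vx vy s) 0 t)
    as [e1 [He1 Huhnear]]; [| exact Huh |].
  { apply continuity_pt_plus; [apply (parab_continuity_pt x y vx vy Hode)|].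
    eapply is_derive_continuity_pt, energy_derive; assumption. }
  destruct (continuity_pt_gt_near (parab x y) 0 t (parab_continuity_pt x y vx vy Hode t) Hu)
    as [e2 [He2 Hunear]].
  pose proof (Rmin_l e0 (Rmin e1 e2)). pose proof (Rmin_r e0 (Rmin e1 e2)).
  pose proof (Rmin_l e1 e2). pose proof (Rmin_r e1 e2).
  set (h := Rmin e0 (Rmin e1 e2) / 2).
  assert (Hh : 0 < h) by (apply Rdiv_lt_0_compat; [repeat apply Rmin_glb_lt |]; lra).
  assert (Hnear : Rabs (t + h - t) < Rmin e1 e2).
  { replace (t + h - t) with h by ring. rewrite Rabs_pos_eq; unfold h in *; lra. }
  exists (t + h). split; [|split].
  - apply Hunear. lra.
  - apply Huhnear. lra.
  - rewrite <- Hzero. apply HDright. unfold h in *. lra.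
Qed.

Lemma bounded_parab_energy_nonpos x y vx vy M t :
  stark_ode x y vx vy -> (forall s, radius x y s <= M) ->
  0 < parab x y t -> parab x y t + energy x y vx vy t <= 0.
Proof.
  intros Hode HM Hu. apply Rnot_lt_le. intro Huh.
  destruct (Rtotal_order (parab_rate x y vx vy t) 0) as [Hneg | [Hzero | Hpos]].
  - apply (escape_forward (time_rev x) (time_rev y) (time_rev_vel vx) (time_rev_vel vy)
             (stark_ode_time_rev x y vx vy Hode) M (fun s => HM (- s)) (- t));
      rewrite ?parab_time_rev, ?energy_time_rev, ?parab_rate_time_rev, Ropp_involutive;
      [exact Hu | exact Huh | lra].
  - destruct (turning_point_escapes x y vx vy t Hode Hu Huh Hzero) as (t' & Hu' & Huh' & HD').
    exact (escape_forward x y vx vy Hode M HM t' Hu' Huh' HD').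
  - exact (escape_forward x y vx vy Hode M HM t Hu Huh Hpos).
Qed.

(** * Bounded orbits outside the unit disc *)

Lemma parab_zero_right_of_collision x y t d : ejects_back x y -> collides x y t -> 0 < d ->
  (forall s, t - d < s <= t -> parab x y s = 0) ->
  exists e, 0 < e /\ forall s, t < s < t + e -> parab x y s = 0.
Proof.
  intros Hej Hc Hd Hleft. destruct (Hej t Hc) as [eps [He Hsym]].
  exists (Rmin eps d). split; [apply Rmin_glb_lt; assumption|].
  intros s Hs. pose proof (Rmin_l eps d). pose proof (Rmin_r eps d).
  destruct (Hsym (s - t)) as (_ & Hx & Hy); [rewrite Rabs_pos_eq; lra|].
  replace (t + (s - t)) with s in Hx, Hy by ring.
  unfold parab, radius. rewrite Hx, Hy. apply Hleft. lra.
Qed.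

Section BoundedOrbit.

Variables x y vx vy : R -> R.
Hypothesis Hode : stark_ode x y vx vy.
Variable M : R.
Hypothesis Hbound : forall t, radius x y t <= M.

Lemma bounded_parab_outside_unit_disc t : 1 < radius x y t -> parab x y t = 0.
Proof.
  intro Hr. destruct (parab_ge0 x y t) as [Hu|]; [exfalso|auto].
  pose proof (bounded_parab_energy_nonpos x y vx vy M t Hode Hbound Hu).
  pose proof (parab_energy_ge x y vx vy t).
  assert (/ radius x y t < 1) by (rewrite <- Rinv_1; apply Rinv_lt_contravar; lra).
  lra.
Qed.

Lemma bounded_parab_of_lenz_one t : ~ collides x y t -> lenz x y vx vy t = 1 ->
  parab x y t = 0.
Proof.
  intros Hnc HG. destruct (parab_ge0 x y t) as [Hu|]; [exfalso|auto].
  pose proof (bounded_parab_energy_nonpos x y vx vy M t Hode Hbound Hu).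
  pose proof (parab_rate_sqr x y vx vy t Hnc) as Hsq.
  rewrite HG in Hsq. unfold parab_potential in Hsq.
  set (u := parab x y t) in *. set (h := energy x y vx vy t) in *.
  assert (0 <= u * u * (2 * h + u)).
  { replace (u * u * (2 * h + u)) with (4 * u * ((1 - 1) / 2 + h * u / 2 + u ^ 2 / 4))
      by field.
    rewrite <- Hsq. apply pow2_ge_0. }
  assert (Huu : 0 < u * u) by (apply Rmult_lt_0_compat; exact Hu).
  destruct (Rle_or_lt 0 (2 * h + u)); [lra | nra].
Qed.

Lemma lenz_on_axis p e : 0 < e -> ~ collides x y p ->
  (forall z, Rabs (z - p) < e -> parab x y z = 0) -> lenz x y vx vy p = 1.
Proof.
  intros He Hnc Haxis.
  assert (Hvy : vy p = 0).
  { apply (is_derive_locally_zero y p (vy p) e He); [apply (proj2 Hode p Hnc)|].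
    intros z Hz. apply (parab_eq0 x y z), Haxis, Hz. }
  assert (Hup : parab x y p = 0) by (apply Haxis; rewrite Rminus_diag, Rabs_R0; exact He).
  destruct (parab_eq0 x y p Hup) as [Hyp _].
  pose proof (radius_gt0 x y p Hnc). unfold parab in Hup.
  unfold lenz. rewrite Hvy, Hyp. replace (x p) with (- radius x y p) by lra.
  field. lra.
Qed.

Lemma parab_zero_right_of_regular t d : 0 < d -> ~ collides x y t ->
  (forall s, t - d < s <= t -> parab x y s = 0) ->
  exists e, 0 < e /\ forall s, t < s < t + e -> parab x y s = 0.
Proof.
  intros Hd Hnc Hleft.
  destruct (no_collision_near x y vx vy Hode t Hnc) as [e0 [He0 Hnear]].
  pose proof (Rmin_l e0 d). pose proof (Rmin_r e0 d).
  set (e := Rmin e0 d) in *.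
  assert (He : 0 < e) by (apply Rmin_glb_lt; assumption).
  set (p := t - e / 2).
  assert (Hreg : forall z, p <= z < t + e / 2 -> ~ collides x y z).
  { intros z Hz. apply Hnear. unfold p in Hz. apply Rabs_def1; lra. }
  assert (HGp : lenz x y vx vy p = 1).
  { apply (lenz_on_axis p (e / 2)); [lra | apply Hreg; unfold p; lra |].
    intros z Hz. apply Rabs_def2 in Hz. apply Hleft. unfold p in Hz. lra. }
  exists (e / 2). split; [lra|]. intros s Hs.
  apply bounded_parab_of_lenz_one; [apply Hreg; unfold p; lra|].
  rewrite <- HGp. apply (lenz_const x y vx vy Hode); [unfold p; lra|].
  intros z Hz. apply Hreg. lra.
Qed.

Hypothesis Hej : ejects_back x y.

Lemma parab_zero_forward t1 d : 0 < d -> (forall s, t1 - d < s <= t1 -> parab x y s = 0) ->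
  forall t, t1 <= t -> parab x y t = 0.
Proof.
  intros Hd Hinit T HT.
  apply (interval_induction t1 T (fun t => parab x y t = 0));
    [exact HT | apply Hinit; lra | | | lra].
  - intros t Ht Hleft. apply Rle_antisym; [|apply parab_ge0].
    apply Ropp_le_cancel. rewrite Ropp_0.
    apply (continuity_pt_ge_from_left (fun s => - parab x y s) t1 t 0); [lra | |].
    + apply continuity_pt_opp, (parab_continuity_pt x y vx vy Hode).
    + intros s Hs. rewrite (Hleft s Hs). lra.
  - intros t Ht Hleft.
    assert (Hzero : forall s, t - (t - t1 + d) < s <= t -> parab x y s = 0).
    { intros s Hs. destruct (Rle_dec s t1); [apply Hinit | apply Hleft]; lra. }
    destruct (classic (collides x y t)) as [Hc | Hnc].
    + apply (parab_zero_right_of_collision x y t (t - t1 + d)); [assumption .. | lra | exact Hzero].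
    + apply (parab_zero_right_of_regular t (t - t1 + d)); [lra | assumption | exact Hzero].
Qed.

End BoundedOrbit.

Lemma parab_zero_everywhere x y vx vy M t1 d :
  stark_ode x y vx vy -> (forall t, radius x y t <= M) -> ejects_back x y -> 0 < d ->
  (forall s, Rabs (s - t1) < d -> parab x y s = 0) -> forall t, parab x y t = 0.
Proof.
  intros Hode HM Hej Hd Hnear t.
  destruct (Rle_or_lt t1 t) as [Ht | Ht].
  - apply (parab_zero_forward x y vx vy Hode M HM Hej t1 d Hd); [|exact Ht].
    intros s Hs. apply Hnear, Rabs_def1; lra.
  - rewrite <- (Ropp_involutive t), <- parab_time_rev.
    apply (parab_zero_forward (time_rev x) (time_rev y) (time_rev_vel vx) (time_rev_vel vy)
             (stark_ode_time_rev x y vx vy Hode) M (fun s => HM (- s))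
             (ejects_back_time_rev x y Hej) (- t1) d Hd); [|lra].
    intros s Hs. rewrite parab_time_rev. apply Hnear, Rabs_def1; lra.
Qed.

Lemma axis_orbit_collides x y vx vy : stark_ode x y vx vy ->
  (forall t, y t = 0 /\ x t <= 0) -> exists t, collides x y t.
Proof.
  intros [_ Hd] Haxis. apply NNPP. intro Hnone.
  assert (Hnc : forall t, ~ collides x y t) by (intros t Hc; apply Hnone; exists t; exact Hc).
  destruct (accelerated_eventually_pos x vx (fun t => stark_ax (x t) (y t))) as [t Ht].
  - intro t. apply (Hd t (Hnc t)).
  - intro t. apply (Hd t (Hnc t)).
  - intro t. unfold stark_ax. fold (radius x y t).
    destruct (Haxis t) as [Hy [Hx | Hx]]; [|exfalso; apply (Hnc t); split; assumption].
    assert (0 < radius x y t ^ 3) by apply pow_lt, radius_gt0, Hnc.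
    assert (0 < - x t / radius x y t ^ 3) by (apply Rdiv_lt_0_compat; lra).
    lra.
  - pose proof (proj2 (Haxis t)). lra.
Qed.

Theorem corollary1p2 (x y : R -> R) :
  stark_solution x y -> bounded_orbit x y ->
  collision_ejection_neg_x_axis x y \/
  (forall t, stark_r (x t) (y t) <= 1).
Proof.
  intros [Hcont [[vx [vy Hd]] Hej]] [M HM].
  assert (Hode : stark_ode x y vx vy) by (split; assumption).
  destruct (classic (forall t, stark_r (x t) (y t) <= 1)) as [Hdisc | Hout];
    [right; exact Hdisc | left].
  apply not_all_ex_not in Hout. destruct Hout as [t1 Ht1]. apply Rnot_le_lt in Ht1.
  destruct (continuity_pt_gt_near (radius x y) 1 t1) as [d [Hd0 Hnear]];
    [apply (radius_continuity_pt x y vx vy Hode) | exact Ht1 |].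
  assert (Haxis : forall t, y t = 0 /\ x t <= 0).
  { intro t. apply parab_eq0.
    apply (parab_zero_everywhere x y vx vy M t1 d Hode HM Hej Hd0).
    intros s Hs. apply (bounded_parab_outside_unit_disc x y vx vy Hode M HM), Hnear, Hs. }
  split; [exact Haxis | exact (axis_orbit_collides x y vx vy Hode Haxis)].
Qed.
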